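(* Let $|\phi_{ABC}\rangle$ be a pure three-qubit state. If at least one of the following holds: (i) $|\vec a|^2>\frac{|\vec b|^2+|\vec c|^2}{2}$ and $|\vec b|^2>\frac{|\vec a|^2+|\vec c|^2}{2}$; (ii) $|\vec a|^2>\frac{|\vec b|^2+|\vec c|^2}{2}$ and $|\vec c|^2>\frac{|\vec a|^2+|\vec b|^2}{2}$; (iii) $|\vec b|^2>\frac{|\vec a|^2+|\vec c|^2}{2}$ and $|\vec c|^2>\frac{|\vec a|^2+|\vec b|^2}{2}$, then $|\phi_{ABC}\rangle$ is genuinely tripartite entangled, i.e. it is not a product $|\chi\rangle\otimes|\eta\rangle$ with respect to any bipartition of the three qubits into one qubit versus the other two.
   Context: $\vec a,\vec b,\vec c\in\mathbb R^3$ are the Bloch vectors of the single-qubit reduced states of $|\phi_{ABC}\rangle$: $a_k=\mathrm{Tr}[\rho_A\sigma_k]$, $b_k=\mathrm{Tr}[\rho_B\sigma_k]$, $c_k=\mathrm{Tr}[\rho_C\sigma_k]$, with $\sigma_k$ the Pauli matrices. *)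

From HB Require Import structures.
From mathcomp Require Import all_boot all_order all_algebra.
From mathcomp Require Import complex.
Set Implicit Arguments. Unset Strict Implicit. Unset Printing Implicit Defensive.
Import Order.TTheory GRing.Theory Num.Theory.
Local Open Scope ring_scope.

Section QubitDefs.
Variable R : rcfType.
Local Notation C := R[i].

(* A (not necessarily normalized) three-qubit vector in the computational
   basis: psi i j k = <ijk|phi>, i for qubit A, j for B, k for C. *)
Definition state3 := 'I_2 -> 'I_2 -> 'I_2 -> C.

Definition normalized (psi : state3) : Prop :=
  \sum_(i < 2) \sum_(j < 2) \sum_(k < 2) `|psi i j k| ^+ 2 = 1.

(* Pauli matrices sigma_1 = X, sigma_2 = Y, sigma_3 = Z (indexed 0,1,2). *)
Definition pauli (m : 'I_3) : 'M[C]_2 :=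
  \matrix_(r < 2, s < 2)
    if val m == 0%N then (if r != s then 1 else 0)
    else if val m == 1%N then
      (if (val r == 0%N) && (val s == 1%N) then - 'i%C
       else if (val r == 1%N) && (val s == 0%N) then 'i%C else 0)
    else (if r == s then (if val r == 0%N then 1 else -1) else 0).

Definition rhoA (psi : state3) : 'M[C]_2 :=
  \matrix_(i < 2, i' < 2) \sum_(j < 2) \sum_(k < 2) psi i j k * conjc (psi i' j k).
Definition rhoB (psi : state3) : 'M[C]_2 :=
  \matrix_(j < 2, j' < 2) \sum_(i < 2) \sum_(k < 2) psi i j k * conjc (psi i j' k).
Definition rhoC (psi : state3) : 'M[C]_2 :=
  \matrix_(k < 2, k' < 2) \sum_(i < 2) \sum_(j < 2) psi i j k * conjc (psi i j k').

Definition bloch (rho : 'M[C]_2) (m : 'I_3) : C := \tr (rho *m pauli m).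

Definition normsq (v : 'I_3 -> C) : C := \sum_(m < 3) `|v m| ^+ 2.

Definition product_A_BC (psi : state3) : Prop :=
  exists (chi : 'I_2 -> C) (eta : 'I_2 -> 'I_2 -> C),
    forall i j k, psi i j k = chi i * eta j k.
Definition product_B_AC (psi : state3) : Prop :=
  exists (chi : 'I_2 -> C) (eta : 'I_2 -> 'I_2 -> C),
    forall i j k, psi i j k = chi j * eta i k.
Definition product_C_AB (psi : state3) : Prop :=
  exists (chi : 'I_2 -> C) (eta : 'I_2 -> 'I_2 -> C),
    forall i j k, psi i j k = chi k * eta i j.

Definition genuinely_tripartite_entangled (psi : state3) : Prop :=
  ~ product_A_BC psi /\ ~ product_B_AC psi /\ ~ product_C_AB psi.

End QubitDefs.

From HB Require Import structures.
From mathcomp Require Import all_boot all_order all_algebra.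
From mathcomp Require Import complex ring sesquilinear spectral.
Set Implicit Arguments.
Unset Strict Implicit.
Unset Printing Implicit Defensive.
Import Order.TTheory GRing.Theory Num.Theory.
Local Open Scope ring_scope.
Local Open Scope sesquilinear_scope.

(* If the state is a product across X|YZ, the reduced state of X is pure, so
   |x|^2 = (tr rho_X)^2, while rho_Y and rho_Z are, up to the same positive
   factor, the Gram matrices E E^* and E^T conj(E) of the 2x2 coefficient
   matrix E of the YZ factor.  For a 2x2 Hermitian rho, |bloch rho|^2 =
   (tr rho)^2 - 4 det rho, and both Gram matrices have trace ||E||^2 and
   determinant |det E|^2.  Hence |y|^2 = |z|^2 <= |x|^2, so neither y nor z
   exceeds the mean of the other two, whereas each of (i)-(iii) forces one of
   them to, whichever qubit is split off. *)

Lemma det_mx22 (T : comPzRingType) (A : 'M[T]_2) :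
  \det A = A 0 0 * A 1 1 - A 0 1 * A 1 0.
Proof.
rewrite (expand_det_row _ 0) !big_ord_recl big_ord0 /cofactor !det_mx11 !mxE /=.
rewrite addr0 expr0 exprS expr0 mulr1 !mul1r mulN1r mulrN.
by congr (A _ _ * A _ _ - A _ _ * A _ _); apply: val_inj.
Qed.

Lemma midf_ltr (F : numFieldType) (x y : F) : ((x + y) / 2 < y) = (x < y).
Proof. by rewrite ltr_pdivrMr ?ltr0n // mulr_natr mulr2n ltrD2r. Qed.

Section BlochGram.
Variable R : rcfType.
Local Notation C := R[i].

Lemma normsq_blochZ (s : C) (rho : 'M[C]_2) :
  normsq (bloch (s *: rho)) = `|s| ^+ 2 * normsq (bloch rho).
Proof.
rewrite /normsq mulr_sumr; apply: eq_bigr => m _.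
by rewrite /bloch -scalemxAl mxtraceZ normrM exprMn.
Qed.

Lemma normsq_bloch_hermsym (rho : 'M[C]_2) : rho \is hermsymmx ->
  normsq (bloch rho) = \tr rho ^+ 2 - 4 * \det rho.
Proof.
move=> /is_hermitianmxP; rewrite expr0 scale1r => rhoE.
have rho10 : rho 1 0 = (rho 0 1)^* by rewrite {1}rhoE !mxE.
have rho00 : (rho 0 0)^* = rho 0 0 by rewrite {2}rhoE !mxE.
have rho11 : (rho 1 1)^* = rho 1 1 by rewrite {2}rhoE !mxE.
have ord0E : ord0 = 0 :> 'I_2 by [].
have ord1E : lift ord0 ord0 = 1 :> 'I_2 by apply: val_inj.
have sqr_i : 'i * 'i = -1 :> C by rewrite -expr2 sqrCi.
rewrite /normsq /bloch det_mx22 /mxtrace !big_ord_recl !big_ord0 !normCK.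
rewrite !mxE !big_ord_recl !big_ord0 !mxE /= ord0E ord1E rho10.
rewrite !(rmorphD, rmorphM, rmorphN, rmorph0, rmorph1, conjCK) /= rho00 rho11.
rewrite conjCK complexiE conjCi.
ring: sqr_i.
Qed.

Definition gram m n (M : 'M[C]_(m, n)) : 'M[C]_m := M *m M ^t*.

Lemma gram_hermsym m n (M : 'M[C]_(m, n)) : gram M \is hermsymmx.
Proof.
by apply/is_hermitianmxP; rewrite expr0 scale1r /gram trmx_mul map_mxM trmxCK.
Qed.

Lemma det_gram n (M : 'M[C]_n) : \det (gram M) = `|\det M| ^+ 2.
Proof. by rewrite det_mulmx det_map_mx det_tr normCK. Qed.

Lemma det_gram_eq0 m n (M : 'M[C]_(m, n)) : (n < m)%N -> \det (gram M) = 0.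
Proof.
move=> lt_nm; apply/eqP; apply: contraTT lt_nm => det_neq0.
rewrite -leqNgt -(mxrank_unit (A := gram M)) ?unitmxE ?unitfE //.
exact: leq_trans (mxrankM_maxl _ _) (rank_leq_col M).
Qed.

Lemma mxtrace_gram m n (M : 'M[C]_(m, n)) :
  \tr (gram M) = \sum_i \sum_j `|M i j| ^+ 2.
Proof.
apply: eq_bigr => i _; rewrite !mxE; apply: eq_bigr => j _.
by rewrite !mxE normCK.
Qed.

Lemma mxtrace_gram_ge0 m n (M : 'M[C]_(m, n)) : 0 <= \tr (gram M).
Proof.
rewrite mxtrace_gram; apply: sumr_ge0 => i _; apply: sumr_ge0 => j _.
exact/exprn_ge0/normr_ge0.
Qed.

Lemma mxtrace_gram_tr m n (M : 'M[C]_(m, n)) : \tr (gram M^T) = \tr (gram M).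
Proof.
rewrite !mxtrace_gram exchange_big; apply: eq_bigr => i _.
by apply: eq_bigr => j _; rewrite mxE.
Qed.

Lemma normsq_bloch_gram (M : 'M[C]_2) :
  normsq (bloch (gram M)) = \tr (gram M) ^+ 2 - 4 * `|\det M| ^+ 2.
Proof. by rewrite normsq_bloch_hermsym ?gram_hermsym // det_gram. Qed.

Lemma normsq_bloch_gram_cV (v : 'cV[C]_2) :
  normsq (bloch (gram v)) = \tr (gram v) ^+ 2.
Proof.
by rewrite normsq_bloch_hermsym ?gram_hermsym // det_gram_eq0 // mulr0 subr0.
Qed.

Lemma normsq_bloch_gram_tr (M : 'M[C]_2) :
  normsq (bloch (gram M^T)) = normsq (bloch (gram M)).
Proof. by rewrite !normsq_bloch_gram mxtrace_gram_tr det_tr. Qed.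

Lemma reduced_product_A_BC (psi : state3 R) chi eta :
  (forall i j k, psi i j k = chi i * eta j k) ->
  let u : 'cV_2 := \col_i chi i in let E : 'M_2 := \matrix_(j, k) eta j k in
  [/\ rhoA psi = \tr (gram E) *: gram u, rhoB psi = \tr (gram u) *: gram E
     & rhoC psi = \tr (gram u) *: gram E^T].
Proof.
move=> psiE u E; split; apply/matrixP => i i'.
all: rewrite !mxE /mxtrace !big_ord_recl !big_ord0 !mxE !big_ord_recl !big_ord0 !mxE.
all: rewrite !psiE !rmorphM; ring.
Qed.

Lemma reduced_product_B_AC (psi : state3 R) chi eta :
  (forall i j k, psi i j k = chi j * eta i k) ->
  let u : 'cV_2 := \col_i chi i in let E : 'M_2 := \matrix_(j, k) eta j k in
  [/\ rhoB psi = \tr (gram E) *: gram u, rhoA psi = \tr (gram u) *: gram E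
     & rhoC psi = \tr (gram u) *: gram E^T].
Proof.
move=> psiE u E; split; apply/matrixP => i i'.
all: rewrite !mxE /mxtrace !big_ord_recl !big_ord0 !mxE !big_ord_recl !big_ord0 !mxE.
all: rewrite !psiE !rmorphM; ring.
Qed.

Lemma reduced_product_C_AB (psi : state3 R) chi eta :
  (forall i j k, psi i j k = chi k * eta i j) ->
  let u : 'cV_2 := \col_i chi i in let E : 'M_2 := \matrix_(j, k) eta j k in
  [/\ rhoC psi = \tr (gram E) *: gram u, rhoA psi = \tr (gram u) *: gram E
     & rhoB psi = \tr (gram u) *: gram E^T].
Proof.
move=> psiE u E; split; apply/matrixP => i i'.
all: rewrite !mxE /mxtrace !big_ord_recl !big_ord0 !mxE !big_ord_recl !big_ord0 !mxE.
all: rewrite !psiE !rmorphM; ring.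
Qed.

Lemma normsq_bloch_product (u : 'cV[C]_2) (E : 'M[C]_2) :
  normsq (bloch (\tr (gram u) *: gram E)) =
    normsq (bloch (\tr (gram u) *: gram E^T)) /\
  normsq (bloch (\tr (gram u) *: gram E)) <=
    normsq (bloch (\tr (gram E) *: gram u)).
Proof.
split; first by rewrite !normsq_blochZ normsq_bloch_gram_tr.
rewrite !normsq_blochZ normsq_bloch_gram normsq_bloch_gram_cV.
rewrite !(ger0_norm (mxtrace_gram_ge0 _)) mulrBr mulrC gerBl.
by rewrite !mulr_ge0 ?exprn_ge0 ?mxtrace_gram_ge0.
Qed.

Lemma normsq_bloch_A_BC (psi : state3 R) : product_A_BC psi ->
  normsq (bloch (rhoB psi)) = normsq (bloch (rhoC psi)) /\
  normsq (bloch (rhoB psi)) <= normsq (bloch (rhoA psi)).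
Proof.
by case=> chi [eta /reduced_product_A_BC [-> -> ->]]; apply: normsq_bloch_product.
Qed.

Lemma normsq_bloch_B_AC (psi : state3 R) : product_B_AC psi ->
  normsq (bloch (rhoA psi)) = normsq (bloch (rhoC psi)) /\
  normsq (bloch (rhoA psi)) <= normsq (bloch (rhoB psi)).
Proof.
by case=> chi [eta /reduced_product_B_AC [-> -> ->]]; apply: normsq_bloch_product.
Qed.

Lemma normsq_bloch_C_AB (psi : state3 R) : product_C_AB psi ->
  normsq (bloch (rhoA psi)) = normsq (bloch (rhoB psi)) /\
  normsq (bloch (rhoA psi)) <= normsq (bloch (rhoC psi)).
Proof.
by case=> chi [eta /reduced_product_C_AB [-> -> ->]]; apply: normsq_bloch_product.
Qed.

End BlochGram.

Theorem theorem9 (R : rcfType) (psi : state3 R) :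
  normalized psi ->
  let a2 := normsq (bloch (rhoA psi)) in
  let b2 := normsq (bloch (rhoB psi)) in
  let c2 := normsq (bloch (rhoC psi)) in
  (a2 > (b2 + c2) / 2 /\ b2 > (a2 + c2) / 2) \/
  (a2 > (b2 + c2) / 2 /\ c2 > (a2 + b2) / 2) \/
  (b2 > (a2 + c2) / 2 /\ c2 > (a2 + b2) / 2) ->
  genuinely_tripartite_entangled psi.
Proof.
move=> _ a2 b2 c2 gap.
have bisepA : product_A_BC psi -> b2 = c2 /\ b2 <= a2 := @normsq_bloch_A_BC R psi.
have bisepB : product_B_AC psi -> a2 = c2 /\ a2 <= b2 := @normsq_bloch_B_AC R psi.
have bisepC : product_C_AB psi -> a2 = b2 /\ a2 <= c2 := @normsq_bloch_C_AB R psi.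
(* Opaque norms keep the rewrites below from unfolding them during matching. *)
clearbody a2 b2 c2; split; [|split].
- case/bisepA => eq_bc le_ba.
  move: gap; rewrite -eq_bc midf_ltr (le_gtF le_ba).
  by case=> [[]|[[]|[]]].
- case/bisepB => eq_ac le_ab.
  move: gap; rewrite -eq_ac [a2 + b2]addrC midf_ltr (le_gtF le_ab).
  by case=> [[]|[[]|[]]].
- case/bisepC => eq_ab le_ac.
  move: gap; rewrite -eq_ab [a2 + c2]addrC midf_ltr (le_gtF le_ac).
  by case=> [[]|[[]|[]]].
Qed.
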